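(* Let $L^\bullet$ be a generalized operator algebra with the block-matrix property and let $$\mathfrak A_{\mathfrak P}:0\to H(g^0;P_0)\xrightarrow{A_0}H(g^1;P_1)\xrightarrow{A_1}H(g^2;P_2)\to\cdots$$ be a complex with $A_j\in T^0((g^j,g^{j+1});P_j,P_{j+1})$, $j\ge0$. Let $\mathfrak A^\wedge_{\mathfrak P}$ be its lift. Then $$\ker A_{[j]}=\ker\big(A_j:H(g^j,P_j)\to H(g^{j+1},P_{j+1})\big)\oplus\ker P_{j-1}\oplus\mathrm{im}\,P_{j-2}\oplus\ker P_{j-3}\oplus\cdots,$$ $$\mathrm{im}\,A_{[j]}=\mathrm{im}\big(A_j:H(g^j,P_j)\to H(g^{j+1},P_{j+1})\big)\oplus\ker P_j\oplus\mathrm{im}\,P_{j-1}\oplus\ker P_{j-2}\oplus\cdots,$$ (images and kernels of $P_k$ taken in $H(g^k)$); consequently $\mathcal H_j(\mathfrak A_{\mathfrak P})\cong\mathcal H_j(\mathfrak A^\wedge_{\mathfrak P})$ for all $j\ge0$, and $\mathfrak A_{\mathfrak P}$ is Fredholm (resp. exact) iff $\mathfrak A^\wedge_{\mathfrak P}$ is Fredholm (resp. exact).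
   Context: Generalized operator algebra $L^\bullet$: weights $g\in G$ with Hilbert spaces $H(g)$, spaces $L^{-\infty}((g^0,g^1))\subset L^0((g^0,g^1))\subset\mathcal L(H(g^0),H(g^1))$ closed under composition and adjoints, containing identities, smoothing operators compact. Block-matrix property: there is an associative map $(g^0,g^1)\mapsto g^0\oplus g^1$ on $G$ with $H(g^0\oplus g^1)=H(g^0)\oplus H(g^1)$ such that $L^\mu$ of pairs of direct sums is identified with block matrices whose entries lie in $L^\mu$ of the corresponding pairs. For projections $P_j\in L^0((g^j,g^j))$, $H(g,P):=P(H(g))$ and $T^\mu((g^0,g^1);P_0,P_1)=\{A\in L^\mu((g^0,g^1)):(1-P_1)A=0,\ A(1-P_0)=0\}$. Lift: $g^{[j]}:=g^j\oplus g^{j-1}\oplus\cdots\oplus g^0$ and $A_{[j]}\in L^0((g^{[j]},g^{[j+1]}))$, $A_{[j]}(u_j,u_{j-1},\dots,u_0)=(A_ju_j,(1-P_j)u_j,P_{j-1}u_{j-1},(1-P_{j-2})u_{j-2},P_{j-3}u_{j-3},\dots)$; then $A_{[j+1]}A_{[j]}=0$ and $\mathfrak A^\wedge_{\mathfrak P}:0\to H(g^{[0]})\xrightarrow{A_{[0]}}H(g^{[1]})\xrightarrow{A_{[1]}}\cdots$ is the lift. $\mathcal H_j$ denotes cohomology $\ker/\mathrm{im}$. *)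

From HB Require Import structures.
From mathcomp Require Import all_boot all_order all_algebra.
Set Implicit Arguments. Unset Strict Implicit. Unset Printing Implicit Defensive.
Import GRing.Theory.
Local Open Scope ring_scope.

Section Lift.
Variables (K : fieldType) (V : nat -> lmodType K).
Variables (P : forall j, {linear V j -> V j}) (A : forall j, {linear V j -> V j.+1}).

(* H(g^[j]) = H(g^j) (+) H(g^(j-1)) (+) ... (+) H(g^0), as nested products
   (u_j, (u_(j-1), ( ... , u_0))). *)
Fixpoint Wsp (j : nat) : lmodType K :=
  match j with
  | 0 => V 0
  | j'.+1 => ((V j'.+1) * (Wsp j'))%type : lmodType K
  end.

Fixpoint whead (j : nat) : Wsp j -> V j :=
  match j as n return Wsp n -> V n with
  | 0 => fun x => x
  | j'.+1 => fun x => x.1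
  end.

Fixpoint altop (b : bool) (j : nat) : Wsp j -> Wsp j :=
  match j as n return Wsp n -> Wsp n with
  | 0 => fun x => if b then x - P 0 x else P 0 x
  | j'.+1 => fun x => (if b then x.1 - P j'.+1 x.1 else P j'.+1 x.1,
                       altop (~~ b) x.2)
  end.

(* The lifted operator A_[j] : H(g^[j]) -> H(g^[j+1]),
   A_[j](u_j,...,u_0) = (A_j u_j, (1-P_j)u_j, P_(j-1)u_(j-1), (1-P_(j-2))u_(j-2), ...) *)
Definition Alift (j : nat) : Wsp j -> Wsp j.+1 :=
  fun x => (A j (whead x), altop true x).

Fixpoint altsp (b : bool) (j : nat) : Wsp j -> Prop :=
  match j as n return Wsp n -> Prop with
  | 0 => fun x => if b then P 0 x = 0 else exists w, x = P 0 w
  | j'.+1 => fun x => (if b then P j'.+1 x.1 = 0 else exists w, x.1 = P j'.+1 w)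
                      /\ altsp (~~ b) x.2
  end.

Definition inHP (j : nat) (u : V j) : Prop := exists w, u = P j w.

Definition kerAP (j : nat) (u : V j) : Prop := inHP u /\ A j u = 0.

Definition imAP (j : nat) (y : V j.+1) : Prop := exists v, inHP v /\ y = A j v.

Definition kerDesc (j : nat) : Wsp j -> Prop :=
  match j as n return Wsp n -> Prop with
  | 0 => fun x => kerAP x
  | j'.+1 => fun x => kerAP x.1 /\ altsp true x.2
  end.

Definition imDesc (j : nat) (y : Wsp j.+1) : Prop :=
  imAP y.1 /\ altsp true y.2.

Definition origZ (j : nat) : V j -> Prop := @kerAP j.
Definition origB (j : nat) : V j -> Prop :=
  match j as n return V n -> Prop with
  | 0 => fun x => x = 0
  | j'.+1 => fun x => imAP x
  end.

Definition liftZ (j : nat) (x : Wsp j) : Prop := Alift x = 0.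
Definition liftB (j : nat) : Wsp j -> Prop :=
  match j as n return Wsp n -> Prop with
  | 0 => fun x => x = 0
  | j'.+1 => fun x => exists x', x = Alift x'
  end.

End Lift.

(* Z1/B1 ~= Z2/B2 as vector spaces, via a linear map f inducing a
   well-defined bijection of the quotients. *)
Definition subquot_iso (K : fieldType) (U1 U2 : lmodType K)
  (Z1 B1 : U1 -> Prop) (Z2 B2 : U2 -> Prop) : Prop :=
  exists f : {linear U1 -> U2},
    (forall x, Z1 x -> Z2 (f x)) /\
    (forall x, B1 x -> B2 (f x)) /\
    (forall x, Z1 x -> B2 (f x) -> B1 x) /\
    (forall y, Z2 y -> exists2 x, Z1 x & B2 (y - f x)).

Definition subquot_findim (K : fieldType) (U : lmodType K)
  (Z B : U -> Prop) : Prop :=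
  exists s : seq U, forall z, Z z ->
    exists c : 'I_(size s) -> K, B (z - \sum_(i < size s) c i *: s`_i).

Definition subquot_trivial (K : fieldType) (U : lmodType K)
  (Z B : U -> Prop) : Prop := forall z, Z z -> B z.

(* Since A_j vanishes on ker P_j, the lifted operator A_[j] acts on the top
   component through P_j and on every other component by one of the
   complementary projections P_k, 1 - P_k.  Hence ker A_[j] and im A_[j] split
   componentwise, and a cycle of the lift differs from the embedding
   (u_j, 0, ..., 0) of its top component by a boundary.  The embedding of the
   top component and the projection onto it therefore induce mutually inverse
   isomorphisms in cohomology, which transport finite dimensionality and
   vanishing. *)
From HB Require Import structures.
From mathcomp Require Import all_boot all_order all_algebra.
Import GRing.Theory.
Local Open Scope ring_scope.
Set Implicit Arguments. Unset Strict Implicit.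

(* Indexing the coefficients by [nat] avoids casts between ['I_(size s)] and
   ['I_(size (map f s))]. *)
Lemma subquot_findimE (K : fieldType) (U : lmodType K) (Z B : U -> Prop) :
  subquot_findim Z B <->
  exists s : seq U, forall z, Z z ->
    exists c : nat -> K, B (z - \sum_(i < size s) c i *: s`_i).
Proof.
split=> -[s hs]; exists s => z /hs [c hc]; last by exists (fun i => c i).
exists (fun k => oapp c 0 (insub k)).
by rewrite (eq_bigr (fun i => c i *: s`_i)) // => i _; rewrite valK.
Qed.

Lemma linear_sum_map (K : fieldType) (U1 U2 : lmodType K)
    (f : {linear U1 -> U2}) (s : seq U1) (c : nat -> K) :
  \sum_(i < size (map f s)) c i *: (map f s)`_i =
  f (\sum_(i < size s) c i *: s`_i).
Proof.
rewrite linear_sum size_map; apply: eq_bigr => i _.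
by rewrite (nth_map 0) // linearZ.
Qed.

Section SubquotRetract.
Variables (K : fieldType) (U1 U2 : lmodType K).

Record subquot_retract (Z1 B1 : U1 -> Prop) (Z2 B2 : U2 -> Prop)
    (f : U1 -> U2) (g : U2 -> U1) : Prop := SubquotRetract {
  retract_cycle : forall x, Z1 x -> Z2 (f x);
  retract_boundary : forall x, B1 x -> B2 (f x);
  retract_boundary_back : forall y, B2 y -> B1 (g y);
  retract_cancel : cancel f g;
  retract_boundaryD : forall y1 y2, B2 y1 -> B2 y2 -> B2 (y1 + y2);
  retract_cycle_split : forall y, Z2 y -> exists2 x, Z1 x & B2 (y - f x)
}.

Variables (Z1 B1 : U1 -> Prop) (Z2 B2 : U2 -> Prop).
Variables (f : {linear U1 -> U2}) (g : {linear U2 -> U1}).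
Hypothesis fg : subquot_retract Z1 B1 Z2 B2 f g.

Lemma subquot_iso_retract : subquot_iso Z1 B1 Z2 B2.
Proof.
case: fg => fZ fB gB fK _ Z2split; exists f; do !split => //.
by move=> x _ /gB; rewrite fK.
Qed.

Lemma subquot_trivial_retract :
  subquot_trivial Z1 B1 <-> subquot_trivial Z2 B2.
Proof.
case: fg => fZ fB gB fK B2D Z2split; split=> triv.
  move=> y /Z2split [x /triv /fB Bfx Bd].
  by have := B2D _ _ Bd Bfx; rewrite subrK.
by move=> x /fZ /triv /gB; rewrite fK.
Qed.

Lemma subquot_findim_retract :
  subquot_findim Z1 B1 <-> subquot_findim Z2 B2.
Proof.
case: fg => fZ fB gB fK B2D Z2split.
split=> /subquot_findimE [s hs]; apply/subquot_findimE.
  exists (map f s) => y /Z2split [x /hs [c Bc] Bd]; exists c.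
  by have := B2D _ _ Bd (fB _ Bc); rewrite linear_sum_map linearB addrA subrK.
exists (map g s) => z /fZ /hs [c Bc]; exists c.
by have := gB _ Bc; rewrite linear_sum_map linearB fK.
Qed.

End SubquotRetract.

Definition wembed (K : fieldType) (V : nat -> lmodType K) j : V j -> Wsp V j :=
  match j return V j -> Wsp V j with 0 => id | _.+1 => fun u => (u, 0) end.

Lemma wembed_is_linear (K : fieldType) (V : nat -> lmodType K) j :
  linear (@wembed K V j).
Proof.
case: j => [|j] a u v //=.
by apply: injective_projections => //=; rewrite scaler0 addr0.
Qed.

HB.instance Definition _ (K : fieldType) (V : nat -> lmodType K) j :=
  GRing.isLinear.Build K (V j) (Wsp V j) *:%R (@wembed K V j)
    (@wembed_is_linear K V j).

Lemma whead_is_linear (K : fieldType) (V : nat -> lmodType K) j :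
  linear (@whead K V j).
Proof. by case: j. Qed.

HB.instance Definition _ (K : fieldType) (V : nat -> lmodType K) j :=
  GRing.isLinear.Build K (Wsp V j) (V j) *:%R (@whead K V j)
    (@whead_is_linear K V j).

Lemma wembedK (K : fieldType) (V : nat -> lmodType K) j :
  cancel (@wembed K V j) (@whead K V j).
Proof. by case: j. Qed.

Section Lift.
Variables (K : fieldType) (V : nat -> lmodType K).
Variables (P : forall j, {linear V j -> V j}) (A : forall j, {linear V j -> V j.+1}).
Hypothesis P_idem : forall j (u : V j), P j (P j u) = P j u.

Lemma inHP_idem j (u : V j) : inHP P u -> P j u = u.
Proof. by case=> w ->; rewrite P_idem. Qed.

Lemma altopD b j (x y : Wsp V j) :
  altop P b (x + y) = altop P b x + altop P b y.
Proof.
elim: j b x y => [|j IH] b x y /=; last congr (_, _); last exact: IH.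
  by case: b; rewrite linearD // opprD addrACA.
by case: b; rewrite linearD // opprD addrACA.
Qed.

Lemma AliftD j (x y : Wsp V j) : Alift P A (x + y) = Alift P A x + Alift P A y.
Proof. by rewrite /Alift !linearD altopD. Qed.

Lemma altop_eq0 b j (x : Wsp V j) : altop P b x = 0 <-> altsp P (~~ b) x.
Proof.
have top b' k (u : V k) :
    (if b' then u - P k u else P k u) = 0 <->
    (if ~~ b' then P k u = 0 else exists w, u = P k w).
  case: b' => /=; split=> // [/eqP|]; first by rewrite subr_eq0 => /eqP ->; exists u.
  by move/inHP_idem ->; rewrite subrr.
elim: j b x => [|j IH] b x /=; first exact: top.
have [t1 t2] := top b _ x.1; have := IH (~~ b) x.2; rewrite negbK => -[i1 i2].
split=> [[/t1 h1 /i1 h2] // | [/t2 h1 /i2 h2]].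
by congr (_, _).
Qed.

Lemma altsp_altop b j (x : Wsp V j) : altsp P b (altop P b x).
Proof.
elim: j b x => [|j IH] b x /=; last split; last exact: IH.
  by case: b => /=; [rewrite linearB P_idem subrr | exists x].
by case: b => /=; [rewrite linearB P_idem subrr | exists x.1].
Qed.

Lemma altop_id b j (x : Wsp V j) : altsp P b x -> altop P b x = x.
Proof.
have top b' k (u : V k) :
    (if b' then P k u = 0 else exists w, u = P k w) ->
    (if b' then u - P k u else P k u) = u.
  by case: b' => [->|/inHP_idem //]; rewrite subr0.
elim: j b x => [|j IH] b x /=; first exact: top.
by case: x => x1 x2 /= [/top -> /IH ->].
Qed.

Lemma altsp0 b j : altsp P b (0 : Wsp V j).
Proof.
have top b' k : if b' then P k 0 = 0 else exists w, (0 : V k) = P k w.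
  by case: b'; [rewrite linear0 | exists 0; rewrite linear0].
by elim: j b => [|j IH] b /=; [apply: top | split; [apply: top | apply: IH]].
Qed.

Lemma Alift_eq0 j (x : Wsp V j) : Alift P A x = 0 <-> kerDesc P A x.
Proof.
rewrite /Alift; split=> [[Ax0 alt0] | kx].
  have /= := proj1 (altop_eq0 true x) alt0.
  by case: j x Ax0 {alt0} => [|j] x /= ? // [].
have [Ax0 alt] : A j (whead x) = 0 /\ altsp P false x.
  by case: j x kx => [|j] x /= => [[? ?] | [[? ?] ?]].
by congr (_, _); [exact: Ax0 | exact/(altop_eq0 true x)].
Qed.

Hypothesis A_P : forall j (u : V j), A j (u - P j u) = 0.

Lemma A_proj j (u : V j) : A j (P j u) = A j u.
Proof. by apply/eqP; rewrite eq_sym -subr_eq0 -linearB A_P. Qed.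

Lemma A_kerP j (u : V j) : P j u = 0 -> A j u = 0.
Proof. by rewrite -A_proj => ->; rewrite linear0. Qed.

Lemma Alift_imageP j (y : Wsp V j.+1) :
  (exists x : Wsp V j, y = Alift P A x) <-> imDesc P A y.
Proof.
split=> [[x ->] | ].
  split; last exact: altsp_altop.
  by exists (P j (whead x)); split; [exists (whead x) | rewrite A_proj].
(* A preimage puts [v + t] on top, [t] being the [ker P_j] component of [y]:
   [A_j] kills [t] and [1 - P_j] kills [v]. *)
case: y => y1 y2 [[v [/inHP_idem Pv /= ->]] /= alt].
case: j {y1} v Pv y2 alt => [|j] v Pv y2 alt.
  exists (v + y2); rewrite /Alift /= linearD (A_kerP alt) addr0.
  by congr (_, _); rewrite [P 0 _]linearD Pv alt addr0 addrC addKr.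
case: y2 alt => t y3 /= [Pt alt]; exists (v + t, y3).
rewrite /Alift /= linearD (A_kerP Pt) addr0 altop_id //.
by congr (_, (_, _)); rewrite [P _ _]linearD Pv Pt addr0 addrC addKr.
Qed.

Lemma liftZ_wembed j (u : V j) : origZ P A u -> liftZ P A (wembed u).
Proof.
move=> Zu; apply/Alift_eq0; case: j u Zu => [|j] //= u Zu.
by split=> //; apply: altsp0.
Qed.

Lemma liftB_wembed j (u : V j) : origB P A u -> liftB P A (wembed u).
Proof.
case: j u => [|j] u /=; first by move->.
by move=> Bu; apply/Alift_imageP; split=> //; apply: altsp0.
Qed.

Lemma origB_whead j (y : Wsp V j) : liftB P A y -> origB P A (whead y).
Proof. by case: j y => [|j] y /=; [move-> | case/Alift_imageP]. Qed.

Lemma liftBD j (y1 y2 : Wsp V j) :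
  liftB P A y1 -> liftB P A y2 -> liftB P A (y1 + y2).
Proof.
case: j y1 y2 => [|j] y1 y2 /=; first by move=> -> ->; rewrite addr0.
by case=> x1 -> [x2 ->]; exists (x1 + x2); rewrite AliftD.
Qed.

Lemma liftZ_decomp j (y : Wsp V j) :
  liftZ P A y -> origZ P A (whead y) /\ liftB P A (y - wembed (whead y)).
Proof.
move/Alift_eq0; case: j y => [|j] y /=; first by move=> Zy; rewrite subrr.
case=> Zy alt; split=> //; apply/Alift_imageP; split; last by rewrite /= subr0.
by exists 0; split; [exists 0; rewrite linear0 | rewrite /= subrr !linear0].
Qed.

Lemma lift_subquot_retract j :
  subquot_retract (origZ P A (j:=j)) (origB P A (j:=j))
    (liftZ P A (j:=j)) (liftB P A (j:=j)) (@wembed K V j) (@whead K V j).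
Proof.
split; [exact: liftZ_wembed | exact: liftB_wembed | exact: origB_whead
       | exact: wembedK | exact: liftBD | ].
by move=> y /liftZ_decomp [Zy By]; exists (whead y).
Qed.

End Lift.

Theorem mainTheorem13 (K : fieldType) (V : nat -> lmodType K)
  (P : forall j, {linear V j -> V j})
  (A : forall j, {linear V j -> V j.+1})
  (* P_j are projections *)
  (hP : forall j (u : V j), P j (P j u) = P j u)
  (* A_j in T^0((g^j,g^(j+1)); P_j, P_(j+1)) *)
  (hAl : forall j (u : V j), A j u - P j.+1 (A j u) = 0)
  (hAr : forall j (u : V j), A j (u - P j u) = 0)
  (* A_P is a complex on the spaces H(g^j, P_j) *)
  (hcx : forall j (u : V j), inHP P u -> A j.+1 (A j u) = 0) :
  (forall j (x : Wsp V j), Alift P A x = 0 <-> kerDesc P A x) /\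
  (forall j (y : Wsp V j.+1), (exists x : Wsp V j, y = Alift P A x) <-> imDesc P A y) /\
  (forall j, subquot_iso (origZ P A (j:=j)) (origB P A (j:=j))
                         (liftZ P A (j:=j)) (liftB P A (j:=j))) /\
  ((forall j, subquot_findim (origZ P A (j:=j)) (origB P A (j:=j))) <->
   (forall j, subquot_findim (liftZ P A (j:=j)) (liftB P A (j:=j)))) /\
  ((forall j, subquot_trivial (origZ P A (j:=j)) (origB P A (j:=j))) <->
   (forall j, subquot_trivial (liftZ P A (j:=j)) (liftB P A (j:=j)))).
Proof.
have R j := lift_subquot_retract hP hAr j.
split; first exact: Alift_eq0.
split; first exact: Alift_imageP.
split; first by move=> j; apply: subquot_iso_retract (R j).
split; split=> h j.
- exact/(subquot_findim_retract (R j)).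
- exact/(subquot_findim_retract (R j)).
- exact/(subquot_trivial_retract (R j)).
- exact/(subquot_trivial_retract (R j)).
Qed.
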